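(* Let $(X,+,d)$ be a complete, locally compact Abelian metric group with translation-invariant metric $d$. Then the spectre operator $S:K(X)\to K(X)$ is upper-semicontinuous at every $A\in K(X)$; that is, for every $A\in K(X)$ and every $\varepsilon>0$ there exists $\delta>0$ such that for all $B\in K(X)$ with $d_H(A,B)<\delta$ we have $S(B)\subset S(A)_\varepsilon$.
   Context: $d$ satisfies $d(x,y)=d(x+z,y+z)$ for all $x,y,z\in X$. $K(X)$ is the family of non-empty compact subsets of $X$ with the Pompeiu–Hausdorff metric $d_H(A,B)=\max\{\sup_{a\in A}d(a,B),\sup_{b\in B}d(A,b)\}$. For $C\subset X$, $C_\varepsilon:=\{x\in X:\ \exists_{c\in C}\ d(x,c)<\varepsilon\}$. The spectre of $A\subset X$ is $S(A):=\{z\in X:\ \forall_{a\in A}\ (a+z\in A \text{ or } a-z\in A)\}$; it is compact for compact non-empty $A$. *)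

From HB Require Import structures.
From mathcomp Require Import all_boot all_order all_algebra.
From mathcomp Require Import boolp classical_sets reals.
From Stdlib Require List.
Set Implicit Arguments. Unset Strict Implicit. Unset Printing Implicit Defensive.
Import Order.TTheory GRing.Theory Num.Theory.
Local Open Scope classical_set_scope.
Local Open Scope ring_scope.

Section MetricGroup.
Context {R : realType} {X : zmodType} (d : X -> X -> R).

Definition is_metric : Prop :=
  (forall x y, d x y = 0 <-> x = y) /\
  (forall x y, d x y = d y x) /\
  (forall x y z, d x z <= d x y + d y z).

Definition translation_invariant : Prop :=
  forall x y z, d x y = d (x + z) (y + z).

Definition dball (x : X) (r : R) : set X := [set y | d x y < r].

Definition d_open (U : set X) : Prop :=
  forall x, U x -> exists2 r : R, 0 < r & dball x r `<=` U.

Definition d_compact (K : set X) : Prop :=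
  forall (I : Type) (U : I -> set X),
    (forall i, d_open (U i)) -> K `<=` \bigcup_i U i ->
    exists s : seq I, K `<=` [set x | exists2 i, List.In i s & U i x].

Definition d_complete : Prop :=
  forall u : nat -> X,
    (forall e : R, 0 < e -> exists N : nat, forall m n, (N <= m)%N -> (N <= n)%N -> d (u m) (u n) < e) ->
    exists l : X, forall e : R, 0 < e -> exists N : nat, forall n, (N <= n)%N -> d (u n) l < e.

Definition d_locally_compact : Prop :=
  forall x : X, exists K : set X, d_compact K /\ exists2 r : R, 0 < r & dball x r `<=` K.

Definition inKX (A : set X) : Prop := A !=set0 /\ d_compact A.

Definition dist_pt_set (a : X) (B : set X) : R := inf [set d a b | b in B].
Definition dist_set_pt (A : set X) (b : X) : R := inf [set d a b | a in A].

Definition dH (A B : set X) : R :=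
  Num.max (sup [set dist_pt_set a B | a in A]) (sup [set dist_set_pt A b | b in B]).

Definition eps_nbhd (C : set X) (eps : R) : set X :=
  [set x | exists2 c, C c & d x c < eps].

End MetricGroup.

Definition spectre {X : zmodType} (A : set X) : set X :=
  [set z | forall a, A a -> A (a + z)%R \/ A (a - z)%R].

From HB Require Import structures.
From mathcomp Require Import all_boot all_order all_algebra.
From mathcomp Require Import boolp classical_sets reals.
From mathcomp Require Import lra.
From Stdlib Require List.
Set Implicit Arguments. Unset Strict Implicit.
Import Order.TTheory GRing.Theory Num.Theory.
Local Open Scope classical_set_scope.
Local Open Scope ring_scope.

(* If y is not in S(A), some a in A has a + y and a - y outside A, hence at
   positive distance from the compact set A; this persists for every B close
   to A and every z close to y, so such z are not in S(B).  If y is in S(A),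
   a whole ball around y lies in S(A)_eps.  Fixing a0 in A, every z in S(B)
   lies within 2 dH(A,B) of some a - a0 or a0 - a with a in A, so a finite
   ball cover of the compact set A, on each ball of which one of the two
   alternatives holds, yields a uniform delta. *)

Lemma seq_pos_lbound (R : realType) (T : Type) (f : T -> R) (s : seq T) :
  (forall p, List.In p s -> 0 < f p) ->
  exists2 m, 0 < m & forall p, List.In p s -> m <= f p.
Proof.
elim: s => [|x s IH] H; first by exists 1.
have [|m m0 Hm] := IH; first by move=> p Hp; apply: H; right.
have fx0 : 0 < f x by apply: H; left.
exists (Num.min (f x) m); first by rewrite lt_min fx0 m0.
by move=> p [<-|Hp]; rewrite ge_min ?lexx // Hm // orbT.
Qed.

Lemma seq_ubound (R : realType) (T : Type) (f : T -> R) (s : seq T) :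
  exists M, forall p, List.In p s -> f p <= M.
Proof.
elim: s => [|x s [M HM]]; first by exists 0.
by exists (Num.max (f x) M) => p [<-|Hp]; rewrite le_max ?lexx // HM // orbT.
Qed.

Section MetricGroup.
Variables (R : realType) (X : zmodType) (d : X -> X -> R).
Hypothesis hmet : is_metric d.

Lemma d_refl x : d x x = 0.
Proof. exact/(proj1 hmet). Qed.

Lemma d_sym x y : d x y = d y x.
Proof. exact: (proj1 (proj2 hmet)). Qed.

Lemma d_triangle x y z : d x z <= d x y + d y z.
Proof. exact: (proj2 (proj2 hmet)). Qed.

Lemma d_ge0 x y : 0 <= d x y.
Proof. by have := d_triangle x y x; rewrite d_refl (d_sym y x); lra. Qed.

Lemma d_gt0 x y : x <> y -> 0 < d x y.
Proof. by move=> nxy; rewrite lt_neqAle d_ge0 andbT eq_sym; apply/eqP => /(proj1 hmet). Qed.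

Lemma dball_open y r : d_open d (dball d y r).
Proof.
move=> x dyx; exists (r - d y x); first by rewrite subr_gt0.
move=> w dxw; apply: le_lt_trans (d_triangle y x w) _.
by move: dxw; rewrite /dball /= ltrBrDl.
Qed.

Lemma compact_ball_cover (K : set X) (P : X -> R -> Prop) :
  d_compact d K -> (forall k, K k -> exists2 r, 0 < r & P k r) ->
  exists s : seq (X * R), (forall p, List.In p s -> 0 < p.2 /\ P p.1 p.2) /\
    K `<=` [set x | exists2 p, List.In p s & dball d p.1 p.2 x].
Proof.
move=> cK hP; pose I := {p : X * R | 0 < p.2 /\ P p.1 p.2}.
have cover : K `<=` \bigcup_(i : I) dball d (sval i).1 (sval i).2.
  move=> k Kk; have [r r0 Pr] := hP k Kk.
  by exists (exist _ (k, r) (conj r0 Pr)) => //; rewrite /dball /= d_refl.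
have [s Hs] := cK I _ (fun i => @dball_open _ _) cover.
exists (map sval s); split.
- by move=> p /List.in_map_iff [i [<- _]]; exact: (svalP i).
- by move=> x /Hs [i si Ui]; exists (sval i); first exact: List.in_map.
Qed.

Lemma compact_bounded (K : set X) x :
  d_compact d K -> exists M, forall k, K k -> d x k <= M.
Proof.
move=> cK; have [|s [_ Hc]] := compact_ball_cover (P := fun _ r => r = 1) cK.
  by move=> k _; exists 1.
have [M HM] := seq_ubound (fun p : X * R => d x p.1 + p.2) s.
exists M => k /Hc [p sp dpk]; have := HM p sp; have := d_triangle x p.1 k.
by rewrite /dball /= in dpk; lra.
Qed.

Lemma compact_dist_gt0 (K : set X) x :
  d_compact d K -> ~ K x -> exists2 r, 0 < r & forall k, K k -> r <= d x k.
Proof.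
move=> cK nKx.
have [|s [Hs Hc]] := compact_ball_cover (P := fun k r => 2 * r <= d x k) cK.
  move=> k Kk; exists (d x k / 2); last by lra.
  by rewrite divr_gt0 // d_gt0 // => exk; apply: nKx; rewrite exk.
have [m m0 Hm] := seq_pos_lbound (f := snd) (fun p sp => proj1 (Hs p sp)).
exists m => // k /Hc [p sp dpk]; have := Hm p sp; have := proj2 (Hs p sp).
by have := d_triangle x k p.1; rewrite /dball /= in dpk; rewrite (d_sym k); lra.
Qed.

Lemma dH_lt_near (A B : set X) delta :
  inKX d A -> inKX d B -> dH d A B < delta ->
  (forall a, A a -> exists2 b, B b & d a b < delta) /\
  (forall b, B b -> exists2 a, A a & d a b < delta).
Proof.
move=> [[a0 Aa0] cA] [[b0 Bb0] cB].
have [MA HA] := compact_bounded a0 cA; have [MB HB] := compact_bounded a0 cB.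
have dAB a b : A a -> B b -> d a b <= MA + MB.
  move=> Aa Bb; have := HA a Aa; have := HB b Bb.
  by have := d_triangle a a0 b; rewrite (d_sym a a0); lra.
have lb0 (Y : set X) x : has_lbound [set d x y | y in Y].
  by exists 0 => _ [y _ <-]; apply: d_ge0.
have lb0' (Y : set X) y : has_lbound [set d x y | x in Y].
  by exists 0 => _ [x _ <-]; apply: d_ge0.
rewrite /dH gt_max => /andP [hAB hBA]; split.
- move=> a Aa; have : dist_pt_set d a B < delta.
    apply: le_lt_trans hAB; apply: ub_le_sup; last by exists a.
    exists (MA + MB) => _ [a' Aa' <-].
    by apply: le_trans (dAB a' b0 Aa' Bb0); apply: ge_inf => //; exists b0.
  by move/inf_lt => [|_ [b Bb <-]]; [exists (d a b0), b0 | exists b].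
- move=> b Bb; have : dist_set_pt d A b < delta.
    apply: le_lt_trans hBA; apply: ub_le_sup; last by exists b.
    exists (MA + MB) => _ [b' Bb' <-].
    by apply: le_trans (dAB a0 b' Aa0 Bb'); apply: ge_inf => //; exists a0.
  by move/inf_lt => [|_ [a Aa <-]]; [exists (d a0 b), a0 | exists a].
Qed.

Hypothesis hinv : translation_invariant d.

Lemma d_addl c x y : d (c + x) (c + y) = d x y.
Proof. by rewrite (addrC c) (addrC c) -hinv. Qed.

Lemma d_subr c x y : d (x - c) (y - c) = d x y.
Proof. by rewrite -hinv. Qed.

Lemma d_opp x y : d (- x) (- y) = d x y.
Proof. by rewrite (hinv _ _ (x + y)) addKr addrC addrK d_sym. Qed.

Lemma d_subl c x y : d (c - x) (c - y) = d x y.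
Proof. by rewrite d_addl d_opp. Qed.

Lemma not_spectre_nbhd (A : set X) y : inKX d A -> ~ spectre A y ->
  exists2 rho, 0 < rho & forall B, inKX d B -> dH d A B < rho ->
    forall z, d y z < rho -> ~ spectre B z.
Proof.
move=> hA nSy.
have [a [Aa [nAay nAsy]]] : exists a, A a /\ ~ A (a + y) /\ ~ A (a - y).
  apply: contra_notP nSy => nex a' Aa'.
  have [Aay|nAay] := EM (A (a' + y)); [by left | right].
  by apply: contra_notP nex => nAsy; exists a'.
have [r1 r10 H1] := compact_dist_gt0 (proj2 hA) nAay.
have [r2 r20 H2] := compact_dist_gt0 (proj2 hA) nAsy.
exists (Num.min r1 r2 / 3); first by rewrite divr_gt0 // lt_min r10 r20.
have [hr1 hr2] : 3 * (Num.min r1 r2 / 3) <= r1 /\ 3 * (Num.min r1 r2 / 3) <= r2.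
  by rewrite mulrC divfK ?pnatr_eq0 //; split; rewrite ge_min lexx ?orbT.
move: (Num.min r1 r2 / 3) hr1 hr2 => rho hr1 hr2 B hB hAB z dyz Sz.
have [hnA hnB] := dH_lt_near hA hB hAB.
have [b Bb dab] := hnA a Aa.
have [Bbz|Bbz] := Sz b Bb; have [a' Aa' da'] := hnB _ Bbz.
- have := H1 a' Aa'; have := d_triangle (a + y) (b + y) a'.
  have := d_triangle (b + y) (b + z) a'.
  by rewrite d_addl -hinv (d_sym (b + z)); lra.
- have := H2 a' Aa'; have := d_triangle (a - y) (b - y) a'.
  have := d_triangle (b - y) (b - z) a'.
  by rewrite d_subl d_subr (d_sym (b - z)); lra.
Qed.

Definition spectre_controlled (A : set X) eps y rho : Prop :=
  dball d y rho `<=` eps_nbhd d (spectre A) eps \/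
  (forall B, inKX d B -> dH d A B < rho -> forall z, dball d y rho z -> ~ spectre B z).

Lemma spectre_controlled_le A eps y rho rho' :
  spectre_controlled A eps y rho -> rho' <= rho -> spectre_controlled A eps y rho'.
Proof.
move=> [H|H] hrho; [left | right].
- by move=> z dyz; apply: H; apply: lt_le_trans hrho.
- by move=> B hB hAB z dyz; apply: H => //; apply: lt_le_trans hrho.
Qed.

Lemma spectre_controlled_exists A eps y : inKX d A -> 0 < eps ->
  exists2 rho, 0 < rho & spectre_controlled A eps y rho.
Proof.
move=> hA eps0; have [Sy|nSy] := EM (spectre A y).
- by exists eps => //; left => z dyz; exists y; rewrite // d_sym.
- by have [rho rho0 H] := not_spectre_nbhd hA nSy; exists rho => //; right.
Qed.

Lemma spectre_near_difference (A B : set X) delta a0 z :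
  inKX d A -> inKX d B -> dH d A B < delta -> A a0 -> spectre B z ->
  exists2 a, A a & exists2 y, y = a - a0 \/ y = a0 - a & d y z < 2 * delta.
Proof.
move=> hA hB hAB Aa0 Sz; have [hnA hnB] := dH_lt_near hA hB hAB.
have [b0 Bb0 d0] := hnA a0 Aa0.
have [Bz|Bz] := Sz b0 Bb0; have [a Aa da] := hnB _ Bz; exists a => //.
- exists (a - a0); first by left.
  have shift : d (b0 + z - a0) z = d a0 b0.
    by rewrite -[X in d _ X](addrK a0 z) d_subr (addrC z) -hinv d_sym.
  by have := d_triangle (a - a0) (b0 + z - a0) z; rewrite d_subr shift; lra.
- exists (a0 - a); first by right.
  have shift : d (a0 - (b0 - z)) z = d a0 b0.
    by rewrite -[X in d _ X](subKr b0 z) d_subr.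
  by have := d_triangle (a0 - a) (a0 - (b0 - z)) z; rewrite d_subl shift; lra.
Qed.

End MetricGroup.

Theorem theorem3p12 (R : realType) (X : zmodType) (d : X -> X -> R)
  (hmet : is_metric d) (hinv : translation_invariant d)
  (hcompl : d_complete d) (hloc : d_locally_compact d) :
  forall A : set X, inKX d A ->
  forall eps : R, 0 < eps ->
  exists2 delta : R, 0 < delta &
    forall B : set X, inKX d B -> dH d A B < delta ->
      spectre B `<=` eps_nbhd d (spectre A) eps.
Proof.
move=> A hA eps eps0; have [[a0 Aa0] cA] := hA.
pose P a r := forall y, y = a - a0 \/ y = a0 - a -> spectre_controlled d A eps y (2 * r).
have [|s [Hs Hc]] := compact_ball_cover hmet (P := P) cA.
  move=> a _.
  have [r1 r10 G1] := spectre_controlled_exists hmet hinv (a - a0) hA eps0.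
  have [r2 r20 G2] := spectre_controlled_exists hmet hinv (a0 - a) hA eps0.
  exists (Num.min r1 r2 / 2); first by rewrite divr_gt0 // lt_min r10 r20.
  rewrite /P mulrC divfK ?pnatr_eq0 // => y [->|->].
  + by apply: spectre_controlled_le G1 _; rewrite ge_min lexx.
  + by apply: spectre_controlled_le G2 _; rewrite ge_min lexx orbT.
have [m m0 Hm] := seq_pos_lbound (f := snd) (fun p sp => proj1 (Hs p sp)).
exists (m / 2) => [|B hB hAB z Sz]; first by rewrite divr_gt0.
have [a Aa [y hy dyz]] := spectre_near_difference hmet hinv hA hB hAB Aa0 Sz.
have [p sp dpa] := Hc a Aa; have [_ Pp] := Hs p sp; have mp := Hm p sp.
have [y' Gy' dy'y] : exists2 y', spectre_controlled d A eps y' (2 * p.2) & d y' y = d p.1 a.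
  case: hy => ->; [exists (p.1 - a0) | exists (a0 - p.1)].
  - by apply: Pp; left.
  - exact: d_subr.
  - by apply: Pp; right.
  - exact: d_subl.
have dy'z : dball d y' (2 * p.2) z.
  by have := d_triangle hmet y' y z; rewrite /dball /= in dpa *; lra.
case: Gy' => [Gy'|Gy']; first exact: Gy'.
have hABp : dH d A B < 2 * p.2 by lra.
by case: (Gy' B hB hABp z dy'z Sz).
Qed.
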